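(* For $(\mu_0^2,\mu_1^2,\mu_\infty^2)\in[0,1)^3$ put $s=\mu_0^2+\mu_1^2+\mu_\infty^2$ and $t=\mu_0^2\mu_1^2+\mu_1^2\mu_\infty^2+\mu_\infty^2\mu_0^2$. The domain in the $(s,t)$-plane of all such points $(s,t)$ is the region bounded by the curves \[ t=\frac{s^2}{3},\quad t=0,\quad t=s-1,\quad t=2s-3, \] (i.e. its closure is $\{(s,t): 0\le s\le 3,\ \max(0,s-1,2s-3)\le t\le s^2/3\}$), and it is divided into two parts by the curve $D=0$, where $D=(s+1)^2-4(t+1)$.
   Context: $D$ equals the discriminant $(\mu_\infty^2+\mu_0^2-\mu_1^2-1)^2-4(1-\mu_0^2)(1-\mu_\infty^2)$ of the numerator $(1-\mu_\infty^2)x^2+(\mu_\infty^2+\mu_0^2-\mu_1^2-1)x+1-\mu_0^2$ of the coefficient $q$ of the SL-form of the hypergeometric equation. *)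

From HB Require Import structures.
From mathcomp Require Import all_boot all_order all_algebra.
From mathcomp Require Import all_classical all_reals all_analysis.
Unset Printing Implicit Defensive.
Import Order.TTheory GRing.Theory Num.Theory numFieldNormedType.Exports.
Local Open Scope classical_set_scope.
Local Open Scope ring_scope.

(* The variables m0, m1, minf stand for mu_0^2, mu_1^2, mu_infty^2. *)
Definition s_of {R : realType} (m0 m1 minf : R) : R := m0 + m1 + minf.
Definition t_of {R : realType} (m0 m1 minf : R) : R := m0 * m1 + m1 * minf + minf * m0.

Definition st_domain (R : realType) : set (R * R) :=
  [set p | exists m0 m1 minf : R,
     [/\ 0 <= m0 < 1, 0 <= m1 < 1, 0 <= minf < 1 &
         p = (s_of m0 m1 minf, t_of m0 m1 minf) :> R * R]].

Definition Dst {R : realType} (s t : R) : R := (s + 1) ^+ 2 - 4 * (t + 1).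

Definition st_region (R : realType) : set (R * R) :=
  [set p | 0 <= p.1 <= 3 /\
     Num.max 0 (Num.max (p.1 - 1) (2 * p.1 - 3)) <= p.2 <= p.1 ^+ 2 / 3].

From HB Require Import structures.
From mathcomp Require Import all_boot all_order all_algebra.
From mathcomp Require Import all_classical all_reals all_analysis.
From mathcomp Require Import ring lra.
Import Order.TTheory GRing.Theory Num.Theory numFieldNormedType.Exports.
Local Open Scope classical_set_scope.
Local Open Scope ring_scope.

(* The map (mu_0^2, mu_1^2, mu_oo^2) |-> (s, t) sends the unit cube [0,1]^3
   onto the region.  Being the continuous image of a compact set, the region
   is closed, and it contains the domain; conversely every point of the cube
   is the limit of the points l * x, 0 <= l < 1, of [0,1)^3, so its image lies
   in the closure of the domain.  Along the points (x, x, 0) of the domain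
   D = 4x - 3, which takes both signs and vanishes. *)

Lemma continuous_closure_image {T U : topologicalType} {f : T -> U} {A : set T} {x : T} :
  {for x, continuous f} -> closure A x -> closure (f @` A) (f x).
Proof.
move=> fx Ax B /fx /Ax [y [Ay Bfy]].
by exists (f y); split => //; exists y.
Qed.

Lemma closure_itvco_sup {R : realType} {a b : R} : a < b -> closure `[a, b[ b.
Proof.
move=> ab; rewrite closureEcvg; exists b^'-; first exact: at_left_proper_filter.
split; first exact: cvg_at_left_filter.
move=> B AB; apply: filterS AB _; near=> x => /=.
rewrite in_itv /=; apply/andP; split; last by near: x; exact: nbhs_left_lt.
by apply/ltW; near: x; exact: nbhs_left_gt.
Unshelve. all: by end_near.
Qed.

Section Region.
Context {R : realType}.

Definition st_map (x : R * R * R) : R * R :=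
  (s_of x.1.1 x.1.2 x.2, t_of x.1.1 x.1.2 x.2).

Definition unit_cube : set (R * R * R) := `[0, 1] `*` `[0, 1] `*` `[0, 1].

Lemma st_map_continuous : continuous st_map.
Proof.
have c11 : continuous (fun x : R * R * R => x.1.1).
  by move=> x; apply: continuous_comp; exact: cvg_fst.
have c12 : continuous (fun x : R * R * R => x.1.2).
  by move=> x; apply: continuous_comp; [exact: cvg_fst|exact: cvg_snd].
have c2 : continuous (fun x : R * R * R => x.2) by move=> x; exact: cvg_snd.
move=> x; exact: (cvg_pair (cvgD (cvgD (c11 x) (c12 x)) (c2 x))
  (cvgD (cvgD (cvgM (c11 x) (c12 x)) (cvgM (c12 x) (c2 x))) (cvgM (c2 x) (c11 x)))).
Qed.

Lemma compact_unit_cube : compact unit_cube.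
Proof. by apply: compact_setX; [apply: compact_setX|]; exact: segment_compact. Qed.

Lemma st_regionP (s t : R) :
  st_region R (s, t) <->
  [/\ 0 <= s <= 3, 0 <= t, s - 1 <= t, 2 * s - 3 <= t & 3 * t <= s ^+ 2].
Proof.
rewrite /st_region /= !ge_max; split.
- by move=> [-> /andP[/and3P[-> -> ->] ?]]; split=> //; lra.
- by move=> [-> -> -> -> ?]; split=> //; apply/andP; split=> //; lra.
Qed.

Lemma st_map_unit_cube x : unit_cube x -> st_region R (st_map x).
Proof.
case: x => [[a b] c] [[/= +] +] /=; rewrite !in_itv /=.
move=> /andP[a0 a1] /andP[b0 b1] /andP[c0 c1].
have abc : 0 <= a * b * c by rewrite !mulr_ge0.
have abc' : 0 <= (1 - a) * (1 - b) * (1 - c) by rewrite !mulr_ge0 // subr_ge0.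
rewrite st_regionP /s_of /t_of /=; split.
- by apply/andP; split; lra.
- by rewrite !addr_ge0 // mulr_ge0.
- nra.
- nra.
- have := sqr_ge0 (a - b); have := sqr_ge0 (b - c); have := sqr_ge0 (c - a).
  rewrite !expr2; nra.
Qed.

Lemma st_region_preimage p : st_region R p -> exists2 x, unit_cube x & st_map x = p.
Proof.
case: p => s t /st_regionP[/andP[s0 s3] t0 t1 t2 t3].
have [hA|hB] := lerP ((s + 3) * (s - 1)) (4 * t).
- (* a preimage (a, b, b), with a + 2b = s and 2ab + b^2 = t *)
  pose r := Num.sqrt (s ^+ 2 - 3 * t).
  have r0 : 0 <= r by exact: sqrtr_ge0.
  have r2 : r ^+ 2 = s ^+ 2 - 3 * t by rewrite sqr_sqrtr; lra.
  have rs : r <= s by rewrite expr2 in r2 *; nra.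
  have r3 : 2 * r <= 3 - s by rewrite expr2 in r2 *; nra.
  exists ((s + 2 * r) / 3, (s - r) / 3, (s - r) / 3).
    by split; [split|]; rewrite /= in_itv /=; apply/andP; split; lra.
  rewrite /st_map /s_of /t_of /=; congr pair; first lra.
  by rewrite expr2 in r2; nra.
- have s1 : 1 < s by nra.
  (* a preimage (1, b, c), with b + c = s - 1 and bc = t - (s - 1) *)
  pose w := Num.sqrt ((s - 1) ^+ 2 - 4 * (t - (s - 1))).
  have w0 : 0 <= w by exact: sqrtr_ge0.
  have w2 : w ^+ 2 = (s - 1) ^+ 2 - 4 * (t - (s - 1)) by rewrite sqr_sqrtr; nra.
  have ws : w <= s - 1 by rewrite !expr2 in w2 *; nra.
  have w3 : w <= 3 - s by rewrite !expr2 in w2 *; nra.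
  exists (1, (s - 1 + w) / 2, (s - 1 - w) / 2).
    by split; [split|]; rewrite /= in_itv /=; apply/andP; split; lra.
  rewrite /st_map /s_of /t_of /=; congr pair; first lra.
  by rewrite !expr2 in w2; nra.
Qed.

Lemma st_region_image : st_region R = st_map @` unit_cube.
Proof.
apply/seteqP; split; first exact: st_region_preimage.
by move=> _ [x /st_map_unit_cube + <-].
Qed.

Lemma closed_st_region : closed (st_region R).
Proof.
rewrite st_region_image; apply: compact_closed; first exact: norm_hausdorff.
apply: continuous_compact; last exact: compact_unit_cube.
exact/continuous_subspaceT/st_map_continuous.
Qed.

Lemma closure_st_domain_sub : closure (st_domain R) `<=` st_region R.
Proof.
rewrite [X in _ `<=` X](closure_id _).1; last exact: closed_st_region.
apply: closureS => _ [a [b [c [/andP[a0 a1] /andP[b0 b1] /andP[c0 c1] ->]]]].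
apply: (st_map_unit_cube (a, b, c)).
by split; [split|]; rewrite /= in_itv /=; apply/andP; split => //; exact: ltW.
Qed.

Lemma st_region_sub_closure : st_region R `<=` closure (st_domain R).
Proof.
rewrite st_region_image => _ [[[a b] c] cube <-].
pose path l : R * R * R := (l * a, l * b, l * c).
have path_cont : {for 1, continuous path}.
  exact: (cvg_pair (cvg_pair (cvgM cvg_id (cvg_cst a)) (cvgM cvg_id (cvg_cst b)))
    (cvgM cvg_id (cvg_cst c))).
have := continuous_closure_image (continuous_comp path_cont (st_map_continuous _))
  (closure_itvco_sup ltr01).
rewrite /= /path !mul1r; apply: closureS => _ [l + <-]; rewrite /= in_itv /=.
move=> /andP[l0 l1]; move: cube => [[/= +] +] /=; rewrite !in_itv /=.
move=> /andP[a0 a1] /andP[b0 b1] /andP[c0 c1].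
by exists (l * a), (l * b), (l * c); split=> //; apply/andP; split; nra.
Qed.

Definition st_xx0 (x : R) : R * R := (s_of x x 0, t_of x x 0).

Lemma st_domain_diag x : 0 <= x < 1 -> st_domain R (st_xx0 x).
Proof. by move=> x01; exists x, x, 0; rewrite lexx ltr01. Qed.

Lemma Dst_xx0 x : Dst (st_xx0 x).1 (st_xx0 x).2 = 4 * x - 3.
Proof. by rewrite /Dst /st_xx0 /s_of /t_of /=; ring. Qed.

End Region.

Theorem lemma2p4 (R : realType) :
  closure (st_domain R) = st_region R /\
  (exists p, st_domain R p /\ 0 < Dst p.1 p.2) /\
  (exists p, st_domain R p /\ Dst p.1 p.2 < 0) /\
  (exists p, st_domain R p /\ Dst p.1 p.2 = 0).
Proof.
split; first by apply/seteqP; split; [exact: closure_st_domain_sub|exact: st_region_sub_closure].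
split; [exists (st_xx0 (7 / 8))|split; [exists (st_xx0 0)|exists (st_xx0 (3 / 4))]];
  (split; [apply: st_domain_diag; apply/andP; split; lra|rewrite Dst_xx0; lra]).
Qed.
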